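(* Let $q>0$. (1) There exists a unique maximizer $A^*$ of $w$ over $[0,D^*]$. It satisfies $A^*\le\sqrt{\max((q-1)/2,0)}$, and for $0\le A\le D^*$ one has $w'(A)\le0$ if and only if $A\ge A^*$. (2) Moreover, $A^*=0$ if and only if $q\le1$. Here $$w(A):=\frac{1}{G_q(A)}\left[(D^* )^q\frac{(F_q+G_q)(A)}{(F_q+G_q)(D^* )}-A^q\right],\quad 0\le A\le D^*.$$
   Context: $F_q(y):=\int_0^\infty u^{q-1}e^{yu-u^2/2}\,\mathrm{d}u$ and $G_q(y):=F_q(-y)$ for $y\in\mathbb{R}$. $D^*>0$ is the unique positive root of $q-D(F_q+G_q)'(D)/(F_q+G_q)(D)=0$. *)

From Stdlib Require Import Reals.
From Coquelicot Require Import Coquelicot.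
Open Scope R_scope.

(* A^q for A >= 0 (with 0^q = 0, q > 0); extended by 0 for A <= 0. *)
Definition powq (A q : R) : R := if Rlt_dec 0 A then Rpower A q else 0.

Definition Fq (q y : R) : R :=
  RInt_gen (fun u => Rpower u (q - 1) * exp (y * u - u ^ 2 / 2))
           (at_right 0) (Rbar_locally p_infty).

Definition Gq (q y : R) : R := Fq q (- y).

Definition FGq (q : R) : R -> R := fun y => Fq q y + Gq q y.

Definition Dstar_eq (q D : R) : Prop :=
  q - D * Derive (FGq q) D / FGq q D = 0.

Definition wfun (q Ds : R) (A : R) : R :=
  / Gq q A * (powq Ds q * FGq q A / FGq q Ds - powq A q).

(* f has right derivative l (in the extended reals) at x. At interior
   points where f is differentiable this is the ordinary derivative; at
   the endpoint 0 it is the one-sided derivative. *)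
Definition is_rderiv (f : R -> R) (x : R) (l : Rbar) : Prop :=
  filterlim (fun h => (f (x + h) - f x) / h) (at_right 0) (Rbar_locally l).

(* Write [c = Ds^q / (F_q + G_q)(Ds)] and [W = F_(q+1) G_q + F_q G_(q+1)].  Since
   [F_q' = F_(q+1)], the numerator of [w'] is [N(A) = c W(A) - q A^(q-1) G_q(A) - A^q G_(q+1)(A)],
   and the equation defining [Ds] says exactly [N(Ds) = 0].  Integration by parts gives
   [F_(q+2)(y) = y F_(q+1)(y) + q F_q(y)], hence [W' = A W] and
   [(e^(-A^2/2) N)' = q e^(-A^2/2) G_q(A) A^(q-2) (2 A^2 - (q - 1))]:
   the scaled numerator decreases up to [sqrt((q-1)/2)] and increases afterwards.
   For [q <= 1] it therefore stays below its value [0] at [Ds], so [w] decreases on [0, Ds].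
   For [q > 1] it starts at [c W(0) > 0] and has exactly one zero [As] in [(0, Ds]], at most
   [sqrt((q-1)/2)], where [w] switches from increasing to decreasing.  At [A = 0] the right
   derivative of [w] is positive for [q > 1], negative for [q = 1] and [-oo] for [q < 1]. *)

From Stdlib Require Import Reals Lra Classical.
From Coquelicot Require Import Coquelicot.
Open Scope R_scope.

Lemma exp_le_compat a b : a <= b -> exp a <= exp b.
Proof. intros [H|<-]; [left; apply exp_increasing|]; lra. Qed.

Lemma continuous_Rmult (f g : R -> R) x :
  continuous f x -> continuous g x -> continuous (fun y => f y * g y) x.
Proof. apply (@continuous_mult R_UniformSpace R_AbsRing). Qed.

Lemma continuous_Rplus (f g : R -> R) x :
  continuous f x -> continuous g x -> continuous (fun y => f y + g y) x.
Proof. apply (@continuous_plus R_UniformSpace R_AbsRing R_NormedModule). Qed.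

Lemma continuous_Rminus (f g : R -> R) x :
  continuous f x -> continuous g x -> continuous (fun y => f y - g y) x.
Proof. apply (@continuous_minus R_UniformSpace R_AbsRing R_NormedModule). Qed.

Lemma continuous_of_ex_derive (f : R -> R) x : ex_derive f x -> continuous f x.
Proof. apply (@ex_derive_continuous R_AbsRing R_NormedModule). Qed.

Lemma Rpower_add1 A a : 0 < A -> Rpower A (a + 1) = A * Rpower A a.
Proof. intros HA; rewrite Rpower_plus, Rpower_1 by exact HA; ring. Qed.

Lemma Rpower_1_l p : Rpower 1 p = 1.
Proof. unfold Rpower; rewrite ln_1, Rmult_0_r; apply exp_0. Qed.

Lemma Rpower_continuous a x : 0 < x -> continuous (fun u => Rpower u a) x.
Proof.
  intros Hx; apply continuous_of_ex_derive; eexists.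
  apply is_derive_Reals, derivable_pt_lim_power, Hx.
Qed.

Lemma Rpower_lt_near_0 p eps : 0 < p -> 0 < eps ->
  exists d, 0 < d /\ forall u, 0 < u < d -> Rpower u p < eps.
Proof.
  intros Hp He; exists (Rpower eps (/ p)); split; [apply exp_pos|].
  intros u Hu; replace eps with (Rpower (Rpower eps (/ p)) p).
  - apply Rlt_Rpower_l; lra.
  - rewrite Rpower_mult, Rinv_l, Rpower_1 by lra; reflexivity.
Qed.

Lemma at_right_0_intro (P : R -> Prop) d :
  0 < d -> (forall h, 0 < h < d -> P h) -> at_right 0 P.
Proof.
  intros Hd H; exists (mkposreal d Hd); intros h Hh Hh0; apply H.
  apply Rabs_def2 in Hh; unfold minus, plus, opp in Hh; simpl in Hh; lra.
Qed.

Lemma is_lim_Rpower_0 p : 0 < p -> filterlim (fun u => Rpower u p) (at_right 0) (locally 0).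
Proof.
  intros Hp; apply filterlim_locally; intros eps.
  destruct (Rpower_lt_near_0 p eps Hp (cond_pos eps)) as [d [Hd Hsmall]].
  apply (at_right_0_intro _ d Hd); intros u Hu.
  apply Rabs_def1; unfold minus, plus, opp; simpl;
    pose proof (Hsmall u Hu); pose proof (exp_pos (p * ln u)); unfold Rpower in *; lra.
Qed.

Lemma is_lim_Rpower_0_neg p : p < 0 ->
  filterlim (fun u => Rpower u p) (at_right 0) (Rbar_locally p_infty).
Proof.
  intros Hp; unfold Rpower.
  eapply filterlim_comp with (f := fun u => p * ln u) (G := Rbar_locally p_infty);
    [| exact is_lim_exp_p].
  eapply filterlim_comp; [exact is_lim_ln_0|].
  replace p_infty with (Rbar_mult p m_infty); [apply filterlim_Rbar_mult_l|].
  simpl; destruct (Rle_dec 0 p); [exfalso; lra | reflexivity].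
Qed.

Lemma MVT_interior (f d : R -> R) a b : a < b ->
  (forall x, a < x < b -> derivable_pt_lim f x (d x)) ->
  (forall x, a <= x <= b -> continuity_pt f x) ->
  exists c, a < c < b /\ f b - f a = d c * (b - a).
Proof.
  intros Hab Hd Hc.
  set (pr := fun x (Hx : a < x < b) => exist _ (d x) (Hd x Hx) : derivable_pt f x).
  destruct (MVT f id a b pr (fun x _ => derivable_pt_id x) Hab Hc
              (fun x _ => derivable_continuous_pt _ _ (derivable_pt_id x)))
    as [c [Hcab E]].
  exists c; split; [exact Hcab|]; rewrite derive_pt_id in E; simpl in E; unfold id in E; lra.
Qed.

Section Strict_monotonicity.

Variables (f d : R -> R) (a b : R).
Hypothesis f_derive : forall x, a < x < b -> derivable_pt_lim f x (d x).
Hypothesis f_cont : forall x, a <= x <= b -> continuity_pt f x.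

Lemma strict_increasing_of_derive_pos : (forall x, a < x < b -> 0 < d x) ->
  forall x y, a <= x -> x < y -> y <= b -> f x < f y.
Proof.
  intros Hpos x y Hx Hxy Hy.
  destruct (MVT_interior f d x y Hxy) as [c [Hc E]].
  - intros z Hz; apply f_derive; lra.
  - intros z Hz; apply f_cont; lra.
  - pose proof (Hpos c ltac:(lra)); nra.
Qed.

Lemma strict_decreasing_of_derive_neg : (forall x, a < x < b -> d x < 0) ->
  forall x y, a <= x -> x < y -> y <= b -> f y < f x.
Proof.
  intros Hneg x y Hx Hxy Hy.
  destruct (MVT_interior f d x y Hxy) as [c [Hc E]].
  - intros z Hz; apply f_derive; lra.
  - intros z Hz; apply f_cont; lra.
  - pose proof (Hneg c ltac:(lra)); nra.
Qed.

End Strict_monotonicity.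

Lemma is_rderiv_unique f x l1 l2 : is_rderiv f x l1 -> is_rderiv f x l2 -> l1 = l2.
Proof.
  intros H1 H2.
  assert (PF : ProperFilter' (at_right 0)) by apply Proper_StrongProper, at_right_proper_filter.
  apply Rbar_le_antisym; eapply filterlim_le; eauto; apply filter_forall; intros; apply Rle_refl.
Qed.

Lemma is_rderiv_of_derive f x l : is_derive f x l -> is_rderiv f x (Finite l).
Proof.
  intros H%is_derive_Reals; apply filterlim_locally; intros eps.
  destruct (H eps (cond_pos eps)) as [del Hdel].
  apply (at_right_0_intro _ del (cond_pos del)); intros h Hh.
  apply Hdel; [lra | rewrite Rabs_right; lra].
Qed.

Lemma filterlim_0_of_le_scal {T} {F : (T -> Prop) -> Prop} {FF : Filter F} (g e : T -> R) c :
  F (fun x => 0 <= g x <= c * e x) -> filterlim e F (locally 0) -> filterlim g F (locally 0).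
Proof.
  intros Hle He; change (filterlim g F (Rbar_locally 0)).
  apply (filterlim_le_le (fun _ => 0) g (fun x => c * e x)); [exact Hle | apply filterlim_const|].
  eapply filterlim_comp; [exact He|].
  assert (Hc : continuous (fun x => c * x) 0)
    by (apply continuous_Rmult; [apply continuous_const | apply continuous_id]).
  unfold continuous in Hc; cbv beta in Hc; rewrite Rmult_0_r in Hc; exact Hc.
Qed.

Lemma exp_sub_affine_le t : 0 <= exp t - 1 - t <= t ^ 2 * exp (Rabs t).
Proof.
  pose proof (exp_ineq1_le t); pose proof (exp_ineq1_le (- t)).
  assert (Hinv : exp t * exp (- t) = 1) by (rewrite <- exp_plus, Rplus_opp_r; apply exp_0).
  pose proof (exp_pos t); pose proof (exp_pos (- t)).
  split; [lra|].
  destruct (Rle_dec 0 t).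
  - rewrite Rabs_right by lra.
    assert (exp t - 1 <= t * exp t) by nra.
    assert (t * (exp t - 1) <= t * (t * exp t)) by (apply Rmult_le_compat_l; lra).
    nra.
  - rewrite Rabs_left by lra.
    assert (exp t <= 1) by nra.
    assert (1 <= exp (- t)) by nra.
    assert (exp t - 1 - t <= t * t) by nra.
    assert (t * t <= t * t * exp (- t)) by (pose proof (Rle_0_sqr t); unfold Rsqr in *; nra).
    simpl; lra.
Qed.

Lemma derivable_pt_lim_of_quadratic_remainder f y l C : 0 <= C ->
  (forall h, Rabs h <= 1 -> Rabs (f (y + h) - f y - h * l) <= C * h ^ 2) ->
  derivable_pt_lim f y l.
Proof.
  intros HC Hrem eps Heps.
  assert (Hd : 0 < Rmin 1 (eps / (C + 1))) by (apply Rmin_pos; [lra | apply Rdiv_lt_0_compat; lra]).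
  exists (mkposreal _ Hd); intros h Hh0 Hh; simpl in Hh.
  pose proof (Rmin_l 1 (eps / (C + 1))); pose proof (Rmin_r 1 (eps / (C + 1))).
  assert (Habs : 0 < Rabs h) by (apply Rabs_pos_lt, Hh0).
  replace ((f (y + h) - f y) / h - l) with ((f (y + h) - f y - h * l) / h) by (field; exact Hh0).
  unfold Rdiv; rewrite Rabs_mult, Rabs_inv.
  apply (Rmult_lt_reg_r (Rabs h)); [exact Habs|].
  rewrite Rmult_assoc, Rinv_l, Rmult_1_r by lra.
  apply Rle_lt_trans with (C * h ^ 2); [apply Hrem; lra|].
  replace (h ^ 2) with (Rabs h * Rabs h)
    by (rewrite <- Rabs_mult, Rabs_right; [ring | apply Rle_ge, Rle_0_sqr]).
  assert (C * Rabs h < eps).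
  { apply Rle_lt_trans with (C * (eps / (C + 1))); [apply Rmult_le_compat_l; lra|].
    assert (0 < eps / (C + 1)) by (apply Rdiv_lt_0_compat; lra).
    replace (C * (eps / (C + 1))) with (eps - eps / (C + 1)) by (field; lra); lra. }
  nra.
Qed.

(** * Improper integrals over (0, +oo) *)

Section Improper_integral_on_positive_reals.

Variable f : R -> R.
Hypothesis f_nonneg : forall x, 0 < x -> 0 <= f x.
Hypothesis f_cont : forall x, 0 < x -> continuous f x.

Lemma ex_RInt_pos a b : 0 < a -> a <= b -> ex_RInt f a b.
Proof.
  intros Ha Hab; apply (@ex_RInt_continuous R_CompleteNormedModule); intros z Hz.
  rewrite Rmin_left in Hz by lra; apply f_cont; lra.
Qed.

Lemma RInt_pos_le_subinterval a a' b' b : 0 < a -> a <= a' -> a' <= b' -> b' <= b ->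
  RInt f a' b' <= RInt f a b.
Proof.
  intros Ha H1 H2 H3.
  rewrite <- (RInt_Chasles f a a' b), <- (RInt_Chasles f a' b' b)
    by (apply ex_RInt_pos; lra).
  assert (0 <= RInt f a a') by (apply RInt_ge_0; [lra | apply ex_RInt_pos; lra | intros; apply f_nonneg; lra]).
  assert (0 <= RInt f b' b) by (apply RInt_ge_0; [lra | apply ex_RInt_pos; lra | intros; apply f_nonneg; lra]).
  unfold plus; simpl; lra.
Qed.

Lemma RInt_pos_le_Rpower_bound p K a : 0 < p -> 0 < a <= 1 ->
  (forall x, 0 < x <= 1 -> f x <= K * Rpower x (p - 1)) -> 0 <= K ->
  RInt f a 1 <= K / p.
Proof.
  intros Hp Ha Hf HK.
  assert (Hi : is_RInt (fun x => K * Rpower x (p - 1)) a 1 (K * Rpower 1 p / p - K * Rpower a p / p)).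
  { apply (is_RInt_derive (fun x => K * Rpower x p / p)); intros x Hx;
      rewrite Rmin_left, Rmax_right in Hx by lra.
    - apply is_derive_Reals.
      replace (K * Rpower x (p - 1)) with (K * (p * Rpower x (p - 1)) / p) by (field; lra).
      apply derivable_pt_lim_scal_right, derivable_pt_lim_scal, derivable_pt_lim_power; lra.
    - apply continuous_Rmult; [apply continuous_const | apply Rpower_continuous; lra]. }
  apply Rle_trans with (K * Rpower 1 p / p - K * Rpower a p / p).
  - rewrite <- (is_RInt_unique _ _ _ _ Hi).
    apply RInt_le; [lra | apply ex_RInt_pos; lra | eexists; exact Hi | intros; apply Hf; lra].
  - rewrite Rpower_1_l.
    assert (0 <= K * Rpower a p / p) by (pose proof (exp_pos (p * ln a)); unfold Rpower, Rdiv;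
      apply Rmult_le_pos; [nra | left; apply Rinv_0_lt_compat; lra]).
    unfold Rdiv in *; lra.
Qed.

Lemma RInt_pos_le_exp_bound K b : 1 <= b ->
  (forall x, 1 <= x -> f x <= K * exp (- x)) -> 0 <= K -> RInt f 1 b <= K.
Proof.
  intros Hb Hf HK.
  assert (Hi : is_RInt (fun x => K * exp (- x)) 1 b (- K * exp (- b) - - K * exp (-1))).
  { apply (is_RInt_derive (fun x => - K * exp (- x))); intros x Hx.
    - auto_derive; [exact I | ring].
    - apply continuous_Rmult; [apply continuous_const|].
      apply continuous_exp_comp, continuous_of_ex_derive; auto_derive; exact I. }
  apply Rle_trans with (- K * exp (- b) - - K * exp (-1)).
  - rewrite <- (is_RInt_unique _ _ _ _ Hi).
    apply RInt_le; [lra | apply ex_RInt_pos; lra | eexists; exact Hi | intros; apply Hf; lra].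
  - assert (exp (-1) <= 1) by (rewrite <- exp_0; apply exp_le_compat; lra).
    pose proof (exp_pos (- b)); nra.
Qed.

Lemma RInt_pos_bounded p K1 K2 : 0 < p -> 0 <= K1 -> 0 <= K2 ->
  (forall x, 0 < x <= 1 -> f x <= K1 * Rpower x (p - 1)) ->
  (forall x, 1 <= x -> f x <= K2 * exp (- x)) ->
  forall a b, 0 < a -> a < b -> RInt f a b <= K1 / p + K2.
Proof.
  intros Hp HK1 HK2 H1 H2 a b Ha Hab.
  pose proof (Rmin_l a 1); pose proof (Rmin_r a 1); pose proof (Rmax_l b 1); pose proof (Rmax_r b 1).
  assert (Ha1 : 0 < Rmin a 1) by (apply Rmin_glb_lt; lra).
  apply Rle_trans with (RInt f (Rmin a 1) (Rmax b 1)); [apply RInt_pos_le_subinterval; lra|].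
  rewrite <- (RInt_Chasles f (Rmin a 1) 1 (Rmax b 1)) by (apply ex_RInt_pos; lra).
  unfold plus; simpl.
  pose proof (RInt_pos_le_Rpower_bound p K1 (Rmin a 1) Hp (conj Ha1 (Rmin_r a 1)) H1 HK1).
  pose proof (RInt_pos_le_exp_bound K2 (Rmax b 1) (Rmax_r b 1) H2 HK2).
  lra.
Qed.

Lemma is_RInt_gen_pos_of_bounded M :
  (forall a b, 0 < a -> a < b -> RInt f a b <= M) ->
  exists l, is_RInt_gen f (at_right 0) (Rbar_locally p_infty) l /\
    forall a b, 0 < a -> a < b -> RInt f a b <= l.
Proof.
  intros HM.
  set (E := fun r => exists a b, 0 < a /\ a < b /\ r = RInt f a b).
  assert (HEbound : bound E) by (exists M; intros r [a [b [Ha [Hab ->]]]]; apply HM; lra).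
  assert (HEne : exists r, E r) by (exists (RInt f 1 2), 1, 2; repeat split; lra).
  destruct (completeness E HEbound HEne) as [l [Hub Hlub]].
  assert (Hle : forall a b, 0 < a -> a < b -> RInt f a b <= l)
    by (intros a b Ha Hab; apply Hub; exists a, b; auto).
  exists l; split; [| exact Hle].
  apply (proj2 (filterlimi_locally _ _)); intros eps.
  assert (Happrox : exists a0 b0, 0 < a0 /\ a0 < b0 /\ l - eps < RInt f a0 b0).
  { apply NNPP; intros Hn.
    enough (l <= l - eps) by (pose proof (cond_pos eps); lra).
    apply Hlub; intros r [a [b [Ha [Hab ->]]]].
    apply Rnot_lt_le; intros Hlt; apply Hn; exists a, b; auto. }
  destruct Happrox as [a0 [b0 [Ha0 [Hab0 Hlt]]]].
  apply Filter_prod with (fun a => 0 < a < a0) (fun b => b0 < b).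
  - apply (at_right_0_intro _ a0 Ha0); auto.
  - exists b0; auto.
  - intros a b Ha Hb; exists (RInt f a b); split.
    + apply (@RInt_correct R_CompleteNormedModule), ex_RInt_pos; simpl; lra.
    + pose proof (RInt_pos_le_subinterval a a0 b0 b); pose proof (Hle a b).
      apply Rabs_def1; unfold minus, plus, opp; simpl; simpl in Ha, Hb; lra.
Qed.

End Improper_integral_on_positive_reals.

Lemma eventually_positive_interval :
  filter_prod (at_right 0) (Rbar_locally p_infty) (fun ab => 0 < fst ab < snd ab).
Proof.
  apply Filter_prod with (fun a => 0 < a < 1) (fun b => 1 < b).
  - apply (at_right_0_intro _ 1 Rlt_0_1); auto.
  - exists 1; auto.
  - simpl; intros; lra.
Qed.

Lemma is_RInt_gen_pos_abs_le (f g : R -> R) lf lg :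
  (forall x, 0 < x -> Rabs (f x) <= g x) ->
  is_RInt_gen f (at_right 0) (Rbar_locally p_infty) lf ->
  is_RInt_gen g (at_right 0) (Rbar_locally p_infty) lg -> Rabs lf <= lg.
Proof.
  intros Hfg Hf Hg; refine (RInt_gen_norm f g lf lg _ _ Hf Hg);
    eapply filter_imp; try apply eventually_positive_interval; intros [a b] Hab; simpl in *.
  - lra.
  - intros x Hx; apply Hfg; lra.
Qed.

(** * The functions F_q *)

Definition gauss_kernel p y u := Rpower u (p - 1) * exp (y * u - u ^ 2 / 2).

Lemma gauss_kernel_pos p y u : 0 < gauss_kernel p y u.
Proof. apply Rmult_lt_0_compat; apply exp_pos. Qed.

Lemma gauss_kernel_continuous p y u : 0 < u -> continuous (gauss_kernel p y) u.
Proof.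
  intros Hu; apply continuous_Rmult; [apply Rpower_continuous, Hu|].
  apply continuous_exp_comp, continuous_of_ex_derive; auto_derive; exact I.
Qed.

Lemma gauss_kernel_le_near_0 p y u : 0 < u <= 1 ->
  gauss_kernel p y u <= exp (Rabs y) * Rpower u (p - 1).
Proof.
  intros Hu; unfold gauss_kernel; rewrite Rmult_comm.
  apply Rmult_le_compat_r; [left; apply exp_pos | apply exp_le_compat].
  pose proof (Rle_abs y); pose proof (Rabs_pos y); nra.
Qed.

Definition gauss_kernel_tail_const p y := exp ((Rabs (p - 1) + Rabs y + 1) ^ 2 / 2).

(* [(p-1) ln u + y u - u^2/2 <= k u - u^2/2 <= (k+1)^2/2 - u] with [k = |p-1| + |y|] *)
Lemma gauss_kernel_le_exp_neg p y u : 1 <= u ->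
  gauss_kernel p y u <= gauss_kernel_tail_const p y * exp (- u).
Proof.
  intros Hu; unfold gauss_kernel, gauss_kernel_tail_const, Rpower.
  rewrite <- !exp_plus; apply exp_le_compat.
  assert (Hln : 0 <= ln u <= u).
  { split; [rewrite <- ln_1; apply ln_le; lra|].
    pose proof (exp_ineq1_le (ln u)); rewrite exp_ln in *; lra. }
  assert ((p - 1) * ln u <= Rabs (p - 1) * u).
  { pose proof (Rle_abs (p - 1)); pose proof (Rabs_pos (p - 1)); nra. }
  pose proof (Rle_abs y); pose proof (Rabs_pos y); pose proof (Rabs_pos (p - 1)).
  pose proof (pow2_ge_0 (u - (Rabs (p - 1) + Rabs y + 1))); nra.
Qed.

Lemma gauss_kernel_shift p y h u : gauss_kernel p (y + h) u = gauss_kernel p y u * exp (h * u).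
Proof. unfold gauss_kernel; rewrite Rmult_assoc, <- exp_plus; do 2 f_equal; ring. Qed.

Lemma gauss_kernel_succ p y u : 0 < u -> gauss_kernel (p + 1) y u = u * gauss_kernel p y u.
Proof.
  intros Hu; unfold gauss_kernel.
  replace (p + 1 - 1) with (p - 1 + 1) by ring; rewrite Rpower_add1 by exact Hu; ring.
Qed.

Lemma gauss_kernel_is_RInt_gen_bounded p y : 0 < p ->
  exists l, is_RInt_gen (gauss_kernel p y) (at_right 0) (Rbar_locally p_infty) l /\
    forall a b, 0 < a -> a < b -> RInt (gauss_kernel p y) a b <= l.
Proof.
  intros Hp.
  apply is_RInt_gen_pos_of_bounded with (M := exp (Rabs y) / p + gauss_kernel_tail_const p y).
  - intros; left; apply gauss_kernel_pos.
  - intros; apply gauss_kernel_continuous; auto.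
  - apply RInt_pos_bounded; auto; try (left; apply exp_pos).
    + intros; left; apply gauss_kernel_pos.
    + intros; apply gauss_kernel_continuous; auto.
    + intros; apply gauss_kernel_le_near_0; auto.
    + intros; apply gauss_kernel_le_exp_neg; auto.
Qed.

Lemma Fq_is_RInt_gen p y : 0 < p ->
  is_RInt_gen (gauss_kernel p y) (at_right 0) (Rbar_locally p_infty) (Fq p y).
Proof.
  intros Hp; destruct (gauss_kernel_is_RInt_gen_bounded p y Hp) as [l [Hl _]].
  change (Fq p y) with (RInt_gen (gauss_kernel p y) (at_right 0) (Rbar_locally p_infty)).
  rewrite (is_RInt_gen_unique _ _ Hl); exact Hl.
Qed.

Lemma Fq_pos p y : 0 < p -> 0 < Fq p y.
Proof.
  intros Hp; destruct (gauss_kernel_is_RInt_gen_bounded p y Hp) as [l [Hl Hle]].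
  change (Fq p y) with (RInt_gen (gauss_kernel p y) (at_right 0) (Rbar_locally p_infty)).
  rewrite (is_RInt_gen_unique _ _ Hl).
  apply Rlt_le_trans with (RInt (gauss_kernel p y) 1 2); [|apply Hle; lra].
  apply RInt_gt_0; [lra | intros; apply gauss_kernel_pos | intros; apply gauss_kernel_continuous; lra].
Qed.

Lemma Fq_second_order_bound q y h : 0 < q -> Rabs h <= 1 ->
  Rabs (Fq q (y + h) - Fq q y - h * Fq (q + 1) y) <= h ^ 2 * Fq (q + 2) (y + 1).
Proof.
  intros Hq Hh.
  apply (is_RInt_gen_pos_abs_le
           (fun u => gauss_kernel q (y + h) u - gauss_kernel q y u - h * gauss_kernel (q + 1) y u)
           (fun u => h ^ 2 * gauss_kernel (q + 2) (y + 1) u)).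
  - intros u Hu.
    replace (q + 2) with (q + 1 + 1) by ring.
    rewrite !gauss_kernel_succ, !gauss_kernel_shift by exact Hu.
    destruct (exp_sub_affine_le (h * u)) as [T0 T1].
    assert (exp (Rabs (h * u)) <= exp u)
      by (apply exp_le_compat; rewrite Rabs_mult, (Rabs_right u) by lra; pose proof (Rabs_pos h); nra).
    pose proof (gauss_kernel_pos q y u).
    replace (_ - _ - _) with (gauss_kernel q y u * (exp (h * u) - 1 - h * u)) by ring.
    rewrite Rabs_right by (apply Rle_ge, Rmult_le_pos; lra).
    apply Rle_trans with (gauss_kernel q y u * ((h * u) ^ 2 * exp u)).
    + apply Rmult_le_compat_l; [lra|].
      apply Rle_trans with (1 := T1), Rmult_le_compat_l; [apply pow2_ge_0 | assumption].
    + rewrite Rmult_1_l; right; ring.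
  - pose proof (is_RInt_gen_minus _ _ _ _ (Fq_is_RInt_gen q (y + h) Hq) (Fq_is_RInt_gen q y Hq)) as H1.
    pose proof (Fq_is_RInt_gen (q + 1) y ltac:(lra)) as H2; apply (is_RInt_gen_scal _ h) in H2.
    exact (is_RInt_gen_minus _ _ _ _ H1 H2).
  - pose proof (Fq_is_RInt_gen (q + 2) (y + 1) ltac:(lra)) as H; apply (is_RInt_gen_scal _ (h ^ 2)) in H.
    exact H.
Qed.

Lemma Fq_derive q y : 0 < q -> is_derive (Fq q) y (Fq (q + 1) y).
Proof.
  intros Hq; apply is_derive_Reals.
  apply derivable_pt_lim_of_quadratic_remainder with (C := Fq (q + 2) (y + 1)).
  - left; apply Fq_pos; lra.
  - intros h Hh; rewrite (Rmult_comm (Fq _ _)); apply Fq_second_order_bound; assumption.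
Qed.

Lemma Derive_Fq q y : 0 < q -> Derive (Fq q) y = Fq (q + 1) y.
Proof. intros Hq; apply is_derive_unique, Fq_derive, Hq. Qed.

Lemma Fq_continuous q y : 0 < q -> continuous (Fq q) y.
Proof. intros Hq; apply continuous_of_ex_derive; eexists; apply Fq_derive, Hq. Qed.

Lemma gauss_kernel_derive p y u : 0 < u ->
  is_derive (gauss_kernel (p + 1) y) u
    (p * gauss_kernel p y u + y * gauss_kernel (p + 1) y u - gauss_kernel (p + 2) y u).
Proof.
  intros Hu; unfold gauss_kernel.
  replace (p + 1 - 1) with p by ring; replace (p + 2 - 1) with (p + 1) by ring.
  pose proof (proj2 (is_derive_Reals _ _ _) (derivable_pt_lim_power u p Hu)) as Hpow.
  auto_derive; [exists (p * Rpower u (p - 1)); exact Hpow|].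
  rewrite (is_derive_unique _ _ _ Hpow), Rpower_add1 by exact Hu.
  replace (y * u + - (u * (u * 1) * / 2)) with (y * u - u ^ 2 / 2) by (simpl; field).
  field.
Qed.

Lemma gauss_kernel_lim_0 p y : 0 < p -> filterlim (gauss_kernel (p + 1) y) (at_right 0) (locally 0).
Proof.
  intros Hp; apply (filterlim_0_of_le_scal _ (fun u => Rpower u p) (exp (Rabs y)));
    [|apply is_lim_Rpower_0, Hp].
  apply (at_right_0_intro _ 1 Rlt_0_1); intros u Hu; split; [left; apply gauss_kernel_pos|].
  replace p with (p + 1 - 1) at 2 by ring; apply gauss_kernel_le_near_0; lra.
Qed.

Lemma gauss_kernel_lim_p_infty p y : filterlim (gauss_kernel p y) (Rbar_locally p_infty) (locally 0).
Proof.
  apply (filterlim_0_of_le_scal _ (fun u => exp (- u)) (gauss_kernel_tail_const p y)).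
  - exists 1; intros u Hu; split; [left; apply gauss_kernel_pos | apply gauss_kernel_le_exp_neg; lra].
  - eapply filterlim_comp; [apply (filterlim_Rbar_opp p_infty) | exact is_lim_exp_m].
Qed.

(* Integration by parts: [u^q e^{yu - u^2/2}] vanishes at both ends. *)
Lemma Fq_recurrence q y : 0 < q -> Fq (q + 2) y = y * Fq (q + 1) y + q * Fq q y.
Proof.
  intros Hq.
  set (dk := fun u => q * gauss_kernel q y u + y * gauss_kernel (q + 1) y u - gauss_kernel (q + 2) y u).
  assert (HD : forall u, 0 < u -> Derive (gauss_kernel (q + 1) y) u = dk u)
    by (intros u Hu; apply is_derive_unique, gauss_kernel_derive, Hu).
  assert (Hdk : forall u, 0 < u -> continuous dk u).
  { intros u Hu; unfold dk.
    repeat apply continuous_Rminus || apply continuous_Rplus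
      || (apply continuous_Rmult; [apply continuous_const|]) || apply gauss_kernel_continuous, Hu. }
  assert (Hparts : is_RInt_gen dk (at_right 0) (Rbar_locally p_infty) (0 - 0)).
  { apply is_RInt_gen_ext with (Derive (gauss_kernel (q + 1) y)).
    { eapply filter_imp; [|apply eventually_positive_interval]; intros [a b] Hab x Hx; simpl in *.
      rewrite Rmin_left, Rmax_right in Hx by lra; apply HD; lra. }
    apply is_RInt_gen_Derive;
      [ eapply filter_imp; [|apply eventually_positive_interval]; intros [a b] Hab x Hx; simpl in *;
          rewrite Rmin_left, Rmax_right in Hx by lra ..
      | apply gauss_kernel_lim_0, Hq | apply gauss_kernel_lim_p_infty ].
    - eexists; apply gauss_kernel_derive; lra.
    - apply (continuous_ext_loc _ dk); [|apply Hdk; lra].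
      exists (mkposreal x ltac:(lra)); intros v Hv; symmetry; apply HD.
      apply Rabs_def2 in Hv; unfold minus, plus, opp in Hv; simpl in Hv; lra. }
  assert (Hsum : is_RInt_gen dk (at_right 0) (Rbar_locally p_infty)
                   (q * Fq q y + y * Fq (q + 1) y - Fq (q + 2) y)).
  { pose proof (Fq_is_RInt_gen q y Hq) as H0; apply (is_RInt_gen_scal _ q) in H0.
    pose proof (Fq_is_RInt_gen (q + 1) y ltac:(lra)) as H1; apply (is_RInt_gen_scal _ y) in H1.
    pose proof (Fq_is_RInt_gen (q + 2) y ltac:(lra)) as H2.
    exact (is_RInt_gen_minus _ _ _ _ (is_RInt_gen_plus _ _ _ _ H0 H1) H2). }
  pose proof (is_RInt_gen_unique _ _ Hsum) as E; rewrite (is_RInt_gen_unique _ _ Hparts) in E; lra.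
Qed.

(** * The derivative of w *)

Lemma powq_of_pos a x : 0 < x -> powq x a = Rpower x a.
Proof. intros Hx; unfold powq; destruct (Rlt_dec 0 x); [reflexivity | lra]. Qed.

Lemma powq_0 a : powq 0 a = 0.
Proof. unfold powq; destruct (Rlt_dec 0 0); [lra | reflexivity]. Qed.

Lemma powq_derive a A : 0 < A -> is_derive (fun x => powq x a) A (a * powq A (a - 1)).
Proof.
  intros HA; rewrite powq_of_pos by exact HA.
  apply is_derive_ext_loc with (fun x => Rpower x a).
  - apply (locally_interval _ A 0 p_infty HA I); intros x Hx _; rewrite powq_of_pos; [reflexivity | exact Hx].
  - apply is_derive_Reals, derivable_pt_lim_power, HA.
Qed.

Lemma powq_derive_0 a : 1 < a -> is_derive (fun x => powq x a) 0 0.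
Proof.
  intros Ha; apply is_derive_Reals; intros eps Heps.
  destruct (Rpower_lt_near_0 (a - 1) eps ltac:(lra) Heps) as [d [Hd Hsmall]].
  exists (mkposreal d Hd); intros h Hh0 Hh; simpl in Hh.
  rewrite Rplus_0_l, powq_0, !Rminus_0_r.
  unfold powq; destruct (Rlt_dec 0 h).
  - replace a with (a - 1 + 1) at 1 by ring.
    rewrite Rpower_add1 by assumption; unfold Rdiv.
    rewrite Rmult_comm, <- Rmult_assoc, Rinv_l, Rmult_1_l by lra.
    rewrite Rabs_right by (left; apply exp_pos); apply Hsmall; apply Rabs_def2 in Hh; lra.
  - unfold Rdiv; rewrite Rmult_0_l, Rabs_R0; exact Heps.
Qed.

Lemma powq_continuous a x : 0 < a -> 0 <= x -> continuous (fun x => powq x a) x.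
Proof.
  intros Ha [Hx | <-]; [apply continuous_of_ex_derive; eexists; apply powq_derive, Hx|].
  apply continuity_pt_filterlim; intros eps Heps.
  destruct (Rpower_lt_near_0 a eps Ha Heps) as [d [Hd Hsmall]].
  exists d; split; [exact Hd|]; intros x [_ Hx]; simpl in *; unfold R_dist in *.
  rewrite powq_0, Rminus_0_r in *.
  unfold powq; destruct (Rlt_dec 0 x).
  - rewrite Rabs_right by (left; apply exp_pos); apply Hsmall; apply Rabs_def2 in Hx; lra.
  - rewrite Rabs_R0; exact Heps.
Qed.

Lemma Gq_derive q y : 0 < q -> is_derive (Gq q) y (- Gq (q + 1) y).
Proof.
  intros Hq; unfold Gq; auto_derive; [eexists; apply Fq_derive, Hq|].
  rewrite Derive_Fq by exact Hq; ring.
Qed.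

Lemma Gq_recurrence q y : 0 < q -> Gq (q + 2) y = - y * Gq (q + 1) y + q * Gq q y.
Proof. intros Hq; unfold Gq; rewrite Fq_recurrence by exact Hq; ring. Qed.

Lemma Derive_Gq q y : 0 < q -> Derive (Gq q) y = - Gq (q + 1) y.
Proof. intros Hq; apply is_derive_unique, Gq_derive, Hq. Qed.

Ltac ex_derive_side_conditions :=
  repeat match goal with
  | |- _ /\ _ => split
  | |- True => exact I
  | |- ex_derive (fun x => Fq _ x) _ => eexists; apply Fq_derive; lra
  | |- ex_derive (fun x => Gq _ x) _ => eexists; apply Gq_derive; lra
  | |- ex_derive _ _ => eexists; eassumption
  end.

Lemma Gq_pos q y : 0 < q -> 0 < Gq q y.
Proof. apply Fq_pos. Qed.

Lemma Gq_continuous q y : 0 < q -> continuous (Gq q) y.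
Proof. intros Hq; apply continuous_of_ex_derive; eexists; apply Gq_derive, Hq. Qed.

Lemma FGq_pos q y : 0 < q -> 0 < FGq q y.
Proof. intros Hq; pose proof (Fq_pos q y Hq); pose proof (Gq_pos q y Hq); unfold FGq; lra. Qed.

Definition wcoef q Ds := powq Ds q / FGq q Ds.

Definition wronskian q A := Fq (q + 1) A * Gq q A + Fq q A * Gq (q + 1) A.

Definition wnum q c A p dp := c * wronskian q A - dp * Gq q A - p * Gq (q + 1) A.

Definition wnumer q Ds A := wnum q (wcoef q Ds) A (powq A q) (q * powq A (q - 1)).

Lemma wcoef_pos q Ds : 0 < q -> 0 < Ds -> 0 < wcoef q Ds.
Proof.
  intros Hq HDs; unfold wcoef; rewrite powq_of_pos by exact HDs.
  apply Rdiv_lt_0_compat; [apply exp_pos | apply FGq_pos, Hq].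
Qed.

Lemma wronskian_pos q A : 0 < q -> 0 < wronskian q A.
Proof.
  intros Hq; unfold wronskian.
  pose proof (Fq_pos (q + 1) A ltac:(lra)); pose proof (Gq_pos q A Hq).
  pose proof (Fq_pos q A Hq); pose proof (Gq_pos (q + 1) A ltac:(lra)); nra.
Qed.

(* [w = (c FG - P) / G], so [w' = (c (FG' G - FG G') - P' G + P G') / G^2] and [FG' G - FG G' = W]. *)
Lemma wfun_gen_derive q Ds P x p' : 0 < q -> is_derive P x p' ->
  is_derive (fun A => / Gq q A * (powq Ds q * FGq q A / FGq q Ds - P A)) x
    (wnum q (wcoef q Ds) x (P x) p' / Gq q x ^ 2).
Proof.
  intros Hq HP; pose proof (Gq_pos q x Hq); pose proof (FGq_pos q Ds Hq).
  unfold wnum, wronskian, wcoef, FGq, Gq in *; auto_derive.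
  - ex_derive_side_conditions; lra.
  - rewrite !Derive_Fq by exact Hq.
    replace (Derive (fun y => P y) x) with p' by (symmetry; apply is_derive_unique, HP).
    field; lra.
Qed.

Lemma wfun_derive q Ds A : 0 < q -> 0 < A ->
  is_derive (wfun q Ds) A (wnumer q Ds A / Gq q A ^ 2).
Proof.
  intros Hq HA; apply (wfun_gen_derive q Ds (fun x => powq x q)); [exact Hq | apply powq_derive, HA].
Qed.

Lemma wnumer_Dstar q Ds : 0 < q -> 0 < Ds -> Dstar_eq q Ds -> wnumer q Ds Ds = 0.
Proof.
  intros Hq HDs HD; unfold Dstar_eq in HD.
  assert (HDer : Derive (FGq q) Ds = Fq (q + 1) Ds - Gq (q + 1) Ds).
  { apply is_derive_unique; unfold FGq, Gq; auto_derive.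
    - ex_derive_side_conditions.
    - rewrite !Derive_Fq by exact Hq; unfold Gq; ring. }
  rewrite HDer in HD; pose proof (FGq_pos q Ds Hq) as HFG; unfold FGq in *.
  assert (Hq' : q * (Fq q Ds + Gq q Ds) = Ds * (Fq (q + 1) Ds - Gq (q + 1) Ds)).
  { replace q with (Ds * (Fq (q + 1) Ds - Gq (q + 1) Ds) / (Fq q Ds + Gq q Ds)) at 1 by lra.
    field; lra. }
  unfold wnumer, wnum, wronskian, wcoef, FGq; rewrite !powq_of_pos by exact HDs.
  replace (Rpower Ds q) with (Ds * Rpower Ds (q - 1)) by (rewrite <- Rpower_add1 by exact HDs; f_equal; ring).
  replace (q * Rpower Ds (q - 1) * Gq q Ds)
    with (q * (Fq q Ds + Gq q Ds) * (Rpower Ds (q - 1) * Gq q Ds / (Fq q Ds + Gq q Ds))) by (field; lra).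
  rewrite Hq'; field; lra.
Qed.

Lemma wronskian_derive q A : 0 < q -> is_derive (wronskian q) A (A * wronskian q A).
Proof.
  intros Hq; unfold wronskian; auto_derive; [ex_derive_side_conditions|].
  rewrite !Derive_Fq, !Derive_Gq by lra.
  replace (q + 1 + 1) with (q + 2) by ring; rewrite Fq_recurrence, Gq_recurrence by exact Hq.
  ring.
Qed.

Definition scaled_wnum q c (P dP : R -> R) A := exp (- A ^ 2 / 2) * wnum q c A (P A) (dP A).

(* Since [W' = A W], the factor [exp (- A^2 / 2)] kills the contribution of the Wronskian. *)
Lemma scaled_wnum_derive q c P dP ddP A : 0 < q ->
  is_derive P A (dP A) -> is_derive dP A ddP ->
  is_derive (scaled_wnum q c P dP) A (exp (- A ^ 2 / 2) * Gq q A * (q * P A + A * dP A - ddP)).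
Proof.
  intros Hq HP HdP; unfold scaled_wnum, wnum.
  pose proof (wronskian_derive q A Hq) as HW.
  auto_derive; [ex_derive_side_conditions|].
  rewrite !Derive_Gq by lra.
  replace (Derive (fun x => wronskian q x) A) with (A * wronskian q A)
    by (symmetry; apply is_derive_unique, HW).
  replace (Derive (fun x => P x) A) with (dP A) by (symmetry; apply is_derive_unique, HP).
  replace (Derive (fun x => dP x) A) with ddP by (symmetry; apply is_derive_unique, HdP).
  replace (q + 1 + 1) with (q + 2) by ring; rewrite Gq_recurrence by exact Hq.
  replace (- (A * (A * 1)) * / 2) with (- A ^ 2 / 2) by (simpl; field).
  field.
Qed.

Lemma wronskian_continuous q A : 0 < q -> continuous (wronskian q) A.
Proof. intros Hq; apply continuous_of_ex_derive; eexists; apply wronskian_derive, Hq. Qed.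

Lemma scaled_wnum_continuous q c P dP x : 0 < q -> continuous P x -> continuous dP x ->
  continuous (scaled_wnum q c P dP) x.
Proof.
  intros Hq HP HdP; unfold scaled_wnum, wnum.
  apply continuous_Rmult; [apply continuous_exp_comp, continuous_of_ex_derive; auto_derive; exact I|].
  apply continuous_Rminus; [apply continuous_Rminus|]; apply continuous_Rmult; try assumption.
  - apply continuous_const.
  - apply wronskian_continuous, Hq.
  - apply Gq_continuous, Hq.
  - apply Gq_continuous; lra.
Qed.

Definition scaled_wnumer q Ds :=
  scaled_wnum q (wcoef q Ds) (fun x => powq x q) (fun x => q * powq x (q - 1)).

Lemma scaled_wnumer_0 q Ds : scaled_wnumer q Ds 0 = wcoef q Ds * wronskian q 0.
Proof.
  unfold scaled_wnumer, scaled_wnum, wnum; rewrite !powq_0.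
  replace (- 0 ^ 2 / 2) with 0 by (simpl; field); rewrite exp_0; ring.
Qed.

Lemma wnumer_sign_scaled_wnumer q Ds A :
  (0 < wnumer q Ds A <-> 0 < scaled_wnumer q Ds A) /\ (wnumer q Ds A < 0 <-> scaled_wnumer q Ds A < 0).
Proof.
  unfold scaled_wnumer, scaled_wnum; fold (wnumer q Ds A).
  pose proof (exp_pos (- A ^ 2 / 2)) as He; split; split; intros H.
  - apply Rmult_lt_0_compat; assumption.
  - apply (Rmult_lt_reg_l (exp (- A ^ 2 / 2))); lra.
  - nra.
  - apply (Rmult_lt_reg_l (exp (- A ^ 2 / 2))); lra.
Qed.

Lemma scaled_wnumer_derive q Ds A : 0 < q -> 0 < A ->
  derivable_pt_lim (scaled_wnumer q Ds) A
    (q * exp (- A ^ 2 / 2) * Gq q A * Rpower A (q - 2) * (2 * A ^ 2 - (q - 1))).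
Proof.
  intros Hq HA; apply is_derive_Reals.
  replace (q * exp (- A ^ 2 / 2) * Gq q A * Rpower A (q - 2) * (2 * A ^ 2 - (q - 1)))
    with (exp (- A ^ 2 / 2) * Gq q A
          * (q * powq A q + A * (q * powq A (q - 1)) - q * ((q - 1) * powq A (q - 1 - 1)))).
  - apply (scaled_wnum_derive q (wcoef q Ds) (fun x => powq x q) (fun x => q * powq x (q - 1)));
      [exact Hq | apply powq_derive, HA|].
    apply is_derive_scal, powq_derive, HA.
  - rewrite !powq_of_pos by exact HA.
    replace (q - 1 - 1) with (q - 2) by ring.
    replace (Rpower A (q - 1)) with (A * Rpower A (q - 2))
      by (rewrite <- Rpower_add1 by exact HA; f_equal; ring).
    replace (Rpower A q) with (A * (A * Rpower A (q - 2)))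
      by (rewrite <- !Rpower_add1 by exact HA; f_equal; ring).
    ring.
Qed.

(** * Sign of the numerator of w' *)

Section Wnumer_profile.

Variables q Ds : R.
Hypothesis q_pos : 0 < q.
Hypothesis Ds_pos : 0 < Ds.
Hypothesis wnumer_Ds : wnumer q Ds Ds = 0.

Lemma scaled_wnumer_Ds : scaled_wnumer q Ds Ds = 0.
Proof. unfold scaled_wnumer, scaled_wnum; fold (wnumer q Ds Ds); rewrite wnumer_Ds; ring. Qed.

Lemma scaled_wnumer_continuity_pos x : 0 < x -> continuity_pt (scaled_wnumer q Ds) x.
Proof. intros Hx; eapply derivable_continuous_pt; eexists; apply scaled_wnumer_derive; assumption. Qed.

Lemma scaled_wnumer_derive_sign A : 0 < A -> exists K, 0 < K /\
  q * exp (- A ^ 2 / 2) * Gq q A * Rpower A (q - 2) * (2 * A ^ 2 - (q - 1)) = K * (2 * A ^ 2 - (q - 1)).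
Proof.
  intros HA; exists (q * exp (- A ^ 2 / 2) * Gq q A * Rpower A (q - 2)); split; [|ring].
  pose proof (exp_pos (- A ^ 2 / 2)); pose proof (Gq_pos q A q_pos); pose proof (exp_pos ((q - 2) * ln A)).
  unfold Rpower; repeat apply Rmult_lt_0_compat; assumption.
Qed.

Lemma scaled_wnumer_increasing a : 0 < a -> q - 1 <= 2 * a ^ 2 ->
  forall x y, a <= x -> x < y -> scaled_wnumer q Ds x < scaled_wnumer q Ds y.
Proof.
  intros Ha Hqa x y Hx Hxy.
  apply (strict_increasing_of_derive_pos _ _ a y
           (fun A HA => scaled_wnumer_derive q Ds A q_pos ltac:(lra)));
    [intros; apply scaled_wnumer_continuity_pos; lra | | lra..].
  intros A HA; destruct (scaled_wnumer_derive_sign A ltac:(lra)) as [K [HK ->]].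
  apply Rmult_lt_0_compat; [exact HK|]; nra.
Qed.

Lemma wnumer_neg_of_le1 : q <= 1 -> forall A, 0 < A < Ds -> wnumer q Ds A < 0.
Proof.
  intros Hq1 A HA; apply wnumer_sign_scaled_wnumer; rewrite <- scaled_wnumer_Ds.
  apply (scaled_wnumer_increasing A); [lra | nra | lra | lra].
Qed.

Section Gt1.

Hypothesis q_gt1 : 1 < q.
Let crit := sqrt ((q - 1) / 2).

Lemma crit_sq : crit ^ 2 = (q - 1) / 2.
Proof. unfold crit; simpl; rewrite Rmult_1_r; apply sqrt_sqrt; lra. Qed.

Lemma crit_pos : 0 < crit.
Proof. apply sqrt_lt_R0; lra. Qed.

Lemma scaled_wnumer_continuity_gt1 x : 0 <= x -> continuity_pt (scaled_wnumer q Ds) x.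
Proof.
  intros Hx; apply continuity_pt_filterlim, scaled_wnum_continuous; [exact q_pos | |].
  - apply powq_continuous; lra.
  - apply continuous_Rmult; [apply continuous_const | apply powq_continuous; lra].
Qed.

Lemma scaled_wnumer_decreasing_gt1 x y : 0 <= x -> x < y -> y <= crit ->
  scaled_wnumer q Ds y < scaled_wnumer q Ds x.
Proof.
  intros Hx Hxy Hy; pose proof crit_sq; pose proof crit_pos.
  apply (strict_decreasing_of_derive_neg _ _ 0 crit
           (fun A HA => scaled_wnumer_derive q Ds A q_pos ltac:(lra)));
    [intros; apply scaled_wnumer_continuity_gt1; lra | | lra..].
  intros A HA; destruct (scaled_wnumer_derive_sign A ltac:(lra)) as [K [HK ->]].
  assert (A ^ 2 < crit ^ 2) by nra.
  nra.
Qed.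

Lemma scaled_wnumer_0_pos : 0 < scaled_wnumer q Ds 0.
Proof. rewrite scaled_wnumer_0; apply Rmult_lt_0_compat; [apply wcoef_pos | apply wronskian_pos]; assumption. Qed.

Lemma wnumer_eq0_of_scaled_wnumer A : scaled_wnumer q Ds A = 0 -> wnumer q Ds A = 0.
Proof.
  intros H0; destruct (wnumer_sign_scaled_wnumer q Ds A) as [Hp Hn].
  destruct (Rtotal_order (wnumer q Ds A) 0) as [H | [H | H]]; [apply Hn in H | | apply Hp in H]; lra.
Qed.

Lemma wnumer_profile_gt1 : exists As, 0 < As <= crit /\ As <= Ds /\
  (forall A, 0 < A < As -> 0 < wnumer q Ds A) /\
  (forall A, As < A < Ds -> wnumer q Ds A < 0) /\ wnumer q Ds As = 0.
Proof.
  pose proof crit_pos; pose proof crit_sq; pose proof scaled_wnumer_0_pos; pose proof scaled_wnumer_Ds.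
  destruct (Rle_dec Ds crit) as [HDs_le | HDs_gt].
  - exists Ds; split; [lra|]; split; [lra|]; split; [|split; [intros; lra | exact wnumer_Ds]].
    intros A HA; apply wnumer_sign_scaled_wnumer; rewrite <- scaled_wnumer_Ds.
    apply scaled_wnumer_decreasing_gt1; lra.
  - assert (Hcrit_neg : scaled_wnumer q Ds crit < 0)
      by (rewrite <- scaled_wnumer_Ds; apply (scaled_wnumer_increasing crit); lra).
    destruct (Ranalysis5.IVT_interv (fun x => - scaled_wnumer q Ds x) 0 crit) as [As [HAs HAs0]];
      [intros; apply continuity_pt_opp, scaled_wnumer_continuity_gt1; lra | lra..|].
    assert (HAs_root : scaled_wnumer q Ds As = 0) by lra.
    assert (As <> 0) by (intros ->; lra).
    assert (As <> crit) by (intros ->; lra).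
    exists As; split; [lra|]; split; [lra|].
    split; [|split; [|apply wnumer_eq0_of_scaled_wnumer, HAs_root]].
    + intros A HA; apply wnumer_sign_scaled_wnumer; rewrite <- HAs_root.
      apply scaled_wnumer_decreasing_gt1; lra.
    + intros A HA; apply wnumer_sign_scaled_wnumer; destruct (Rle_dec A crit).
      * rewrite <- HAs_root; apply scaled_wnumer_decreasing_gt1; lra.
      * rewrite <- scaled_wnumer_Ds; apply (scaled_wnumer_increasing crit); lra.
Qed.

End Gt1.

Lemma wnumer_profile : exists As, 0 <= As <= Ds /\
  (forall A, 0 < A < As -> 0 < wnumer q Ds A) /\
  (forall A, As < A < Ds -> wnumer q Ds A < 0) /\
  (0 < As -> wnumer q Ds As = 0) /\
  As <= sqrt (Rmax ((q - 1) / 2) 0) /\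
  (As = 0 <-> q <= 1).
Proof.
  destruct (Rle_dec q 1) as [Hq1 | Hq1].
  - exists 0; repeat split; try lra; [intros; lra | apply wnumer_neg_of_le1, Hq1 | apply sqrt_pos].
  - destruct (wnumer_profile_gt1 ltac:(lra)) as [As [HAs [HAsDs [Hpos [Hneg Hroot]]]]].
    exists As; rewrite Rmax_left by lra; repeat split; auto; lra.
Qed.

End Wnumer_profile.

(** * Shape of w *)

Lemma wfun_rderiv_0_gt1 q Ds : 1 < q ->
  is_rderiv (wfun q Ds) 0 (Finite (wcoef q Ds * wronskian q 0 / Gq q 0 ^ 2)).
Proof.
  intros Hq1; apply is_rderiv_of_derive.
  replace (wcoef q Ds * wronskian q 0) with (wnum q (wcoef q Ds) 0 (powq 0 q) 0)
    by (unfold wnum; rewrite powq_0; ring).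
  apply (wfun_gen_derive q Ds (fun x => powq x q)); [lra | apply powq_derive_0, Hq1].
Qed.

Lemma wfun_rderiv_0_eq1 Ds :
  is_rderiv (wfun 1 Ds) 0 (Finite ((wcoef 1 Ds * wronskian 1 0 - Gq 1 0) / Gq 1 0 ^ 2)).
Proof.
  assert (Hid : is_derive (fun x : R => x) 0 1) by (auto_derive; [exact I | ring]).
  pose proof (is_rderiv_of_derive _ _ _ (wfun_gen_derive 1 Ds (fun x => x) 0 1 Rlt_0_1 Hid)) as H.
  cbv beta in H; replace (wnum 1 (wcoef 1 Ds) 0 0 1) with (wcoef 1 Ds * wronskian 1 0 - Gq 1 0) in H
    by (unfold wnum; ring).
  eapply filterlim_ext_loc; [|exact H].
  apply (at_right_0_intro _ 1 Rlt_0_1); intros h Hh.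
  unfold wfun; rewrite !Rplus_0_l, powq_0, (powq_of_pos 1 h), Rpower_1 by lra; reflexivity.
Qed.

(* For [q = 1], [q * powq A (q - 1)] is [1] for [A > 0] but [0] at [A = 0], so the scaled numerator
   is taken with [P A = A], [P' = 1] instead, which is continuous at [0]. *)
Lemma wcoef_wronskian_lt_Gq_eq1 Ds : 0 < Ds -> wnumer 1 Ds Ds = 0 ->
  wcoef 1 Ds * wronskian 1 0 - Gq 1 0 < 0.
Proof.
  intros HDs HN.
  set (s := scaled_wnum 1 (wcoef 1 Ds) (fun x => x) (fun _ => 1)).
  set (ds := fun A => exp (- A ^ 2 / 2) * Gq 1 A * (1 * A + A * 1 - 0)).
  assert (Hs_der : forall A, derivable_pt_lim s A (ds A)).
  { intros A; apply is_derive_Reals, scaled_wnum_derive; [lra | auto_derive; [exact I | ring]|].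
    auto_derive; [exact I | ring]. }
  assert (Hlt : s 0 < s Ds).
  { apply (strict_increasing_of_derive_pos s ds 0 Ds); try lra.
    - intros; apply Hs_der.
    - intros x _; apply derivable_continuous_pt; exists (ds x); apply Hs_der.
    - intros A HA; pose proof (exp_pos (- A ^ 2 / 2)); pose proof (Gq_pos 1 A Rlt_0_1).
      unfold ds; apply Rmult_lt_0_compat; [apply Rmult_lt_0_compat|]; lra. }
  assert (Hs_Ds : s Ds = 0).
  { unfold wnumer in HN; rewrite !powq_of_pos, Rpower_1, Rminus_diag, Rpower_O, Rmult_1_r in HN by exact HDs.
    unfold s, scaled_wnum; rewrite HN; ring. }
  rewrite Hs_Ds in Hlt; unfold s, scaled_wnum, wnum in Hlt.
  replace (- 0 ^ 2 / 2) with 0 in Hlt by (simpl; field); rewrite exp_0 in Hlt; lra.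
Qed.

Lemma wfun_rderiv_0_lt1 q Ds : 0 < q < 1 -> is_rderiv (wfun q Ds) 0 m_infty.
Proof.
  intros Hq.
  set (v := fun A => / Gq q A * (powq Ds q * FGq q A / FGq q Ds - 0)).
  set (L0 := wnum q (wcoef q Ds) 0 0 0 / Gq q 0 ^ 2).
  assert (Hv : is_rderiv v 0 (Finite L0)).
  { apply is_rderiv_of_derive, (wfun_gen_derive q Ds (fun _ => 0)); [lra | auto_derive; reflexivity]. }
  assert (Hpow : filterlim (fun h => Rpower h (q - 1) * / Gq q h) (at_right 0) (Rbar_locally p_infty)).
  { eapply filterlim_comp_2;
      [ apply is_lim_Rpower_0_neg; lra
      | apply (filterlim_filter_le_1 (F := locally 0)); [apply filter_le_within|];
          apply continuous_Rinv_comp; [apply Gq_continuous; lra | pose proof (Gq_pos q 0); lra]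
      | apply (filterlim_Rbar_mult p_infty (/ Gq q 0) p_infty), is_Rbar_mult_p_infty_pos; simpl;
          apply Rinv_0_lt_compat, Gq_pos; lra ]. }
  (* the [A^q] term contributes [- h^(q-1) / G(h)] to the difference quotient *)
  apply (filterlim_ext_loc (fun h => (v (0 + h) - v 0) / h + - (Rpower h (q - 1) * / Gq q h))).
  - apply (at_right_0_intro _ 1 Rlt_0_1); intros h Hh.
    pose proof (Gq_pos q h ltac:(lra)); pose proof (Gq_pos q 0 ltac:(lra)); pose proof (FGq_pos q Ds ltac:(lra)).
    unfold v, wfun; rewrite !Rplus_0_l, !powq_0, (powq_of_pos q h) by lra.
    replace (Rpower h q) with (h * Rpower h (q - 1)) by (rewrite <- Rpower_add1 by lra; f_equal; ring).
    field; lra.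
  - eapply filterlim_comp_2;
      [exact Hv | eapply filterlim_comp; [exact Hpow | apply (filterlim_Rbar_opp p_infty)] |].
    apply (filterlim_Rbar_plus L0 m_infty m_infty); reflexivity.
Qed.

Lemma wfun_rderiv_0 q Ds : 0 < q -> 0 < Ds -> wnumer q Ds Ds = 0 ->
  exists l, is_rderiv (wfun q Ds) 0 l /\ (1 < q -> Rbar_lt 0 l) /\ (q <= 1 -> Rbar_lt l 0).
Proof.
  intros Hq HDs HN; pose proof (pow_lt _ 2 (Gq_pos q 0 Hq)).
  destruct (Rlt_dec 1 q) as [Hq1 | Hq1]; [|destruct (Req_dec q 1) as [-> | Hq1']].
  - eexists; split; [apply wfun_rderiv_0_gt1, Hq1|]; split; [|intros; lra].
    intros _; simpl; apply Rdiv_lt_0_compat; [|assumption].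
    apply Rmult_lt_0_compat; [apply wcoef_pos | apply wronskian_pos]; assumption.
  - eexists; split; [apply wfun_rderiv_0_eq1|]; split; [intros; lra|].
    intros _; simpl; pose proof (wcoef_wronskian_lt_Gq_eq1 Ds HDs HN).
    unfold Rdiv; apply Rmult_neg_pos; [lra | apply Rinv_0_lt_compat; assumption].
  - exists m_infty; split; [apply wfun_rderiv_0_lt1; lra|]; split; [intros; lra | intros; exact I].
Qed.

Lemma wfun_continuous q Ds x : 0 < q -> 0 <= x -> continuity_pt (wfun q Ds) x.
Proof.
  intros Hq Hx; apply continuity_pt_filterlim; change (continuous (wfun q Ds) x); unfold wfun, FGq.
  apply continuous_Rmult.
  - apply continuous_Rinv_comp; [apply Gq_continuous, Hq | pose proof (Gq_pos q x Hq); lra].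
  - apply continuous_Rminus; [|apply powq_continuous; assumption].
    apply continuous_Rmult; [|apply continuous_const].
    apply continuous_Rmult; [apply continuous_const|].
    apply continuous_Rplus; [apply Fq_continuous | apply Gq_continuous]; exact Hq.
Qed.

Section Wfun_shape.

Variables q Ds As : R.
Hypothesis q_pos : 0 < q.
Hypothesis Ds_pos : 0 < Ds.
Hypothesis wnumer_Ds : wnumer q Ds Ds = 0.
Hypothesis As_range : 0 <= As <= Ds.
Hypothesis wnumer_pos_before : forall A, 0 < A < As -> 0 < wnumer q Ds A.
Hypothesis wnumer_neg_after : forall A, As < A < Ds -> wnumer q Ds A < 0.
Hypothesis wnumer_As : 0 < As -> wnumer q Ds As = 0.
Hypothesis As_eq0_iff : As = 0 <-> q <= 1.

Let w := wfun q Ds.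
Let w' A := wnumer q Ds A / Gq q A ^ 2.

Lemma Gq_sq_pos A : 0 < Gq q A ^ 2.
Proof. apply pow_lt, Gq_pos, q_pos. Qed.

Lemma w_derivable A : 0 < A -> derivable_pt_lim w A (w' A).
Proof. intros HA; apply is_derive_Reals, wfun_derive; assumption. Qed.

Lemma w'_nonpos_iff A : 0 < A <= Ds -> (w' A <= 0 <-> As <= A).
Proof.
  intros HA; pose proof (Gq_sq_pos A) as HG; unfold w'; split; intros H.
  - destruct (Rle_dec As A) as [|Hlt]; [assumption|].
    pose proof (Rdiv_pos_pos _ _ (wnumer_pos_before A ltac:(lra)) HG); lra.
  - destruct (Req_dec A As) as [-> | HAs]; [rewrite wnumer_As by lra; unfold Rdiv; lra|].
    destruct (Req_dec A Ds) as [-> | HDs]; [rewrite wnumer_Ds; unfold Rdiv; lra|].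
    left; apply Rdiv_neg_pos; [apply wnumer_neg_after; lra | assumption].
Qed.

Lemma w_lt_w_As A : 0 <= A <= Ds -> A <> As -> w A < w As.
Proof.
  intros HA HAs; pose proof Gq_sq_pos.
  assert (Hcont : forall x, 0 <= x -> continuity_pt w x) by (intros; apply wfun_continuous; assumption).
  destruct (Rlt_dec A As).
  - apply (strict_increasing_of_derive_pos w w' 0 As); try lra;
      [intros; apply w_derivable; lra | intros; apply Hcont; lra |].
    intros x Hx; apply Rdiv_pos_pos; [apply wnumer_pos_before | apply Gq_sq_pos]; lra.
  - apply (strict_decreasing_of_derive_neg w w' As Ds); try lra;
      [intros; apply w_derivable; lra | intros; apply Hcont; lra |].
    intros x Hx; apply Rdiv_neg_pos; [apply wnumer_neg_after | apply Gq_sq_pos]; lra.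
Qed.

Lemma w_rderiv_exists A : 0 <= A <= Ds -> exists l, is_rderiv w A l.
Proof.
  intros [[HA | <-] _]; [eexists; apply is_rderiv_of_derive, wfun_derive; assumption|].
  destruct (wfun_rderiv_0 q Ds q_pos Ds_pos wnumer_Ds) as [l [Hl _]]; exists l; exact Hl.
Qed.

Lemma w_rderiv_nonpos_iff A l : 0 <= A <= Ds -> is_rderiv w A l -> (Rbar_le l 0 <-> As <= A).
Proof.
  intros [[HA | <-] HADs] Hl.
  - rewrite (is_rderiv_unique _ _ _ _ Hl (is_rderiv_of_derive _ _ _ (wfun_derive q Ds A q_pos HA))).
    apply w'_nonpos_iff; lra.
  - destruct (wfun_rderiv_0 q Ds q_pos Ds_pos wnumer_Ds) as [l0 [Hl0 [Hgt1 Hle1]]].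
    rewrite (is_rderiv_unique _ _ _ _ Hl Hl0).
    destruct (Rle_dec q 1) as [Hq1 | Hq1].
    + specialize (Hle1 Hq1); split; [intros; lra | intros; apply Rbar_lt_le, Hle1].
    + specialize (Hgt1 ltac:(lra)); split; [intros H; exfalso; eapply Rbar_lt_not_le; eauto|].
      intros H; exfalso; apply Hq1, As_eq0_iff; lra.
Qed.

End Wfun_shape.

Theorem lemma5p2 (q Ds : R) (hq : 0 < q)
  (hDs : 0 < Ds) (hDeq : Dstar_eq q Ds)
  (hDuniq : forall D, 0 < D -> Dstar_eq q D -> D = Ds) :
  exists As : R,
    (0 <= As <= Ds /\
     (forall A, 0 <= A <= Ds -> wfun q Ds A <= wfun q Ds As)) /\
    (forall B, 0 <= B <= Ds ->
       (forall A, 0 <= A <= Ds -> wfun q Ds A <= wfun q Ds B) -> B = As) /\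
    As <= sqrt (Rmax ((q - 1) / 2) 0) /\
    (forall A, 0 <= A <= Ds -> exists l : Rbar, is_rderiv (wfun q Ds) A l) /\
    (forall A (l : Rbar), 0 <= A <= Ds -> is_rderiv (wfun q Ds) A l ->
       (Rbar_le l 0 <-> As <= A)) /\
    (As = 0 <-> q <= 1).
Proof.
  pose proof (wnumer_Dstar q Ds hq hDs hDeq) as HN.
  destruct (wnumer_profile q Ds hq hDs HN) as [As [HAs [Hpos [Hneg [Hroot [Hbound Hiff]]]]]].
  assert (Hmax : forall A, 0 <= A <= Ds -> A <> As -> wfun q Ds A < wfun q Ds As)
    by (apply w_lt_w_As; assumption).
  exists As.
  split; [split; [exact HAs|] | split; [| split; [exact Hbound | split; [| split; [| exact Hiff]]]]].
  - intros A HA; destruct (Req_dec A As) as [-> | HAs']; [lra | left; apply Hmax; assumption].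
  - intros B HB HBmax; destruct (Req_dec B As) as [| HBAs]; [assumption|].
    pose proof (HBmax As HAs); pose proof (Hmax B HB HBAs); lra.
  - apply w_rderiv_exists; assumption.
  - apply w_rderiv_nonpos_iff with (As := As); assumption.
Qed.
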